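(* In the link-cut tree data structure of Sleator and Tarjan (implemented with splay trees over preferred paths), every operation (link, cut, and queries, all implemented via expose together with $O(1)$ splay-tree concatenate/split operations) takes $O(D^2)$ worst-case time, where $D$ is the diameter of the represented input tree (the maximum number of edges on a simple path).
   Context: The link-cut tree represents a dynamic forest by decomposing each tree into vertex-disjoint preferred paths, each stored in a splay tree keyed by depth; the expose operation makes the path from a vertex to its tree root preferred via a sequence of splice, concatenate and split operations on these splay trees. *)

From mathcomp Require Import all_boot.
Set Implicit Arguments. Unset Strict Implicit. Unset Printing Implicit Defensive.

Section LCT.
Variable V : finType.

Inductive stree : Type := SLeaf | SNode of stree & V & stree.

Fixpoint inorder (t : stree) : seq V :=
  match t with SLeaf => [::] | SNode l x r => inorder l ++ x :: inorder r end.

Fixpoint sdepth (x : V) (t : stree) : nat :=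
  match t with
  | SLeaf => 0
  | SNode l y r =>
      if x == y then 0
      else if x \in inorder l then (sdepth x l).+1 else (sdepth x r).+1
  end.

(** Bottom-up splaying of x to the root (zig / zig-zig / zig-zag),
    written recursively: if the depth of x is odd the single rotation
    (zig) is the last one, performed at the root. *)
Fixpoint splay (x : V) (t : stree) : stree :=
  match t with
  | SLeaf => SLeaf
  | SNode l y r =>
    if x == y then t else
    if x \in inorder l then
      if odd (sdepth x t) then
        match splay x l with
        | SNode a z b => SNode a z (SNode b y r)
        | SLeaf => t end
      else
        match l with
        | SLeaf => t
        | SNode ll z lr =>
          if x \in inorder ll then
            match splay x ll with
            | SNode a w b => SNode a w (SNode b z (SNode lr y r))
            | SLeaf => t end
          else
            match splay x lr with
            | SNode a w b => SNode (SNode ll z a) w (SNode b y r)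
            | SLeaf => t end
        end
    else if x \in inorder r then
      if odd (sdepth x t) then
        match splay x r with
        | SNode a z b => SNode (SNode l y a) z b
        | SLeaf => t end
      else
        match r with
        | SLeaf => t
        | SNode rl z rr =>
          if x \in inorder rr then
            match splay x rr with
            | SNode a w b => SNode (SNode (SNode l y rl) z a) w b
            | SLeaf => t end
          else
            match splay x rl with
            | SNode a w b => SNode (SNode l y a) w (SNode b z rr)
            | SLeaf => t end
        end
    else t
  end.

(** cost of splaying x in t: number of rotations (= depth of x) plus one *)
Definition splay_cost (x : V) (t : stree) : nat := (sdepth x t).+1.

Fixpoint leftmost (t : stree) : option V :=
  match t with
  | SLeaf => None
  | SNode SLeaf x _ => Some x
  | SNode l _ _ => leftmost l
  end.

Fixpoint leftmost_steps (t : stree) : nat :=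
  match t with
  | SLeaf => 0
  | SNode SLeaf _ _ => 0
  | SNode l _ _ => (leftmost_steps l).+1
  end.

(** A link-cut tree state: the list of auxiliary splay trees, one per
    preferred path (in-order = increasing depth), each with its
    path-parent pointer. *)
Definition state := seq (stree * option V).

Definition tidx (s : state) (x : V) : nat :=
  find (fun p : stree * option V => x \in inorder p.1) s.

Definition extract (s : state) (x : V) : (stree * option V) * state :=
  (nth (SLeaf, None) s (tidx s x), take (tidx s x) s ++ drop (tidx s x).+1 s).

Definition rpar (s : state) (x : V) : option V :=
  let p := nth (SLeaf, None) s (tidx s x) in
  let l := inorder p.1 in
  let i := index x l in
  if i == 0 then p.2 else Some (nth x l i.-1).

Definition all_verts (s : state) : seq V := flatten [seq inorder p.1 | p <- s].

Definition lct_valid (s : state) : Prop :=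
  [/\ uniq (all_verts s),
      forall x, x \in all_verts s
    & forall x, exists n, iter n (fun o => obind (rpar s) o) (Some x) = None].

Definition adj (s : state) : rel V :=
  fun x y => (rpar s x == Some y) || (rpar s y == Some x).

Definition diam_le (s : state) (D : nat) : Prop :=
  forall (x : V) (p : seq V), uniq (x :: p) -> path (adj s) x p -> size p <= D.

Definition connected (s : state) (v w : V) : Prop :=
  exists p, path (adj s) v p /\ last v p = w.

(** The expose/access loop: v's current auxiliary tree tv (v at root) has
    path-parent pp; splice it onto the preferred path of pp. *)
Fixpoint access_loop (fuel : nat) (v : V) (tv : stree) (pp : option V)
    (s : state) : stree * option V * state * nat :=
  match pp with
  | None => (tv, pp, s, 0)
  | Some w =>
    match fuel with
    | 0 => (tv, pp, s, 0)
    | f.+1 =>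
      let ex := extract s w in
      let tw := ex.1.1 in
      match splay w tw with
      | SLeaf => (tv, pp, s, 0)
      | SNode l _ r =>
        (* split off w's deeper part, concatenate v's path below w *)
        let s'' := if r is SLeaf then ex.2 else (r, Some w) :: ex.2 in
        let tn := SNode l w tv in
        let '(t, pp', s3, c) := access_loop f v (splay v tn) ex.1.2 s'' in
        (t, pp', s3, splay_cost w tw + splay_cost v tn + 1 + c)
      end
    end
  end.

(** expose(v): returns the new state (v's auxiliary tree first, with v at
    its root) and the cost. *)
Definition access (s : state) (v : V) : state * nat :=
  let ex := extract s v in
  match splay v ex.1.1 with
  | SLeaf => (s, 0)
  | SNode l x r =>
    let s2 := if r is SLeaf then ex.2 else (r, Some v) :: ex.2 in
    let '(t, pp', s3, c) := access_loop #|V| v (SNode l x SLeaf) ex.1.2 s2 in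
    ((t, pp') :: s3, splay_cost v ex.1.1 + 1 + c)
  end.

Inductive op : Type :=
| Expose of V
| FindRoot of V
| Link of V & V        (* make root v a child of w *)
| Cut of V.

Definition run_op (s : state) (o : op) : state * option V * nat :=
  match o with
  | Expose v => let '(s1, c1) := access s v in (s1, None, c1)
  | FindRoot v =>
    let '(s1, c1) := access s v in
    match s1 with
    | (t, pp) :: rest =>
      match leftmost t with
      | Some r => ((splay r t, pp) :: rest, Some r,
                   c1 + leftmost_steps t + splay_cost r t + 1)
      | None => (s1, None, c1 + 1)
      end
    | [::] => (s1, None, c1 + 1)
    end
  | Link v w =>
    let '(s1, c1) := access s v in
    let '(s2, c2) := access s1 w in
    match s2 with
    | (tw, _) :: rest =>
      let ex := extract rest v in
      match ex.1.1 with
      | SNode _ x r => ((SNode tw x r, ex.1.2) :: ex.2, None, c1 + c2 + 1)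
      | SLeaf => (s2, None, c1 + c2 + 1)
      end
    | [::] => (s2, None, c1 + c2 + 1)
    end
  | Cut v =>
    let '(s1, c1) := access s v in
    match s1 with
    | (SNode l x r, pp) :: rest =>
      ((l, None) :: (SNode SLeaf x r, pp) :: rest, None, c1 + 1)
    | _ => (s1, None, c1 + 1)
    end
  end.

Definition op_cost (s : state) (o : op) : nat := (run_op s o).2.

Definition op_pre (s : state) (o : op) : Prop :=
  match o with
  | Link v w => rpar s v = None /\ ~ connected s v w
  | Cut v => rpar s v <> None
  | _ => True
  end.

End LCT.

Arguments SLeaf {V}.

(** The rank of a vertex, the number of vertices on its path to the root of
    its tree, is at most D + 1.  Each auxiliary tree stores a piece of a root
    path, so its in-order sequence, preceded by its path-parent, has strictly
    increasing ranks.  This property only depends on in-order sequences, so it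
    survives splaying, and splitting or splicing a preferred path at a vertex
    w preserves it.  Hence an auxiliary tree has at most D + 1 nodes, a splay
    costs O(D), and during expose the rank of the current path-parent drops at
    each splice, so there are at most D + 1 splices.  Every operation performs
    O(1) exposes.  The invariant is relative to the ranks of the initial
    forest, so no argument that expose preserves the forest is needed. *)

From mathcomp Require Import all_boot zify.
Set Implicit Arguments. Unset Strict Implicit. Unset Printing Implicit Defensive.

Section SplayTree.
Variable V : finType.
Implicit Types (x : V) (t : stree V).

Lemma stree_ind2 (P : stree V -> Prop) :
  P SLeaf ->
  (forall l y r, P l -> P r ->
     (forall ll z lr, l = SNode ll z lr -> P ll /\ P lr) ->
     (forall rl z rr, r = SNode rl z rr -> P rl /\ P rr) ->
     P (SNode l y r)) ->
  forall t, P t.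
Proof.
move=> P0 PN t.
suff [] : P t /\ forall l y r, t = SNode l y r -> P l /\ P r by [].
elim: t => [|l [Pl IHl] y r [Pr IHr]]; first by split.
by split=> [|_ _ _ [<- _ <-]]; first exact: PN.
Qed.

Lemma splay_to_root x t : x \in inorder t ->
  exists a b, splay x t = SNode a x b /\ inorder a ++ x :: inorder b = inorder t.
Proof.
elim/stree_ind2: t => [//|l y r IHl IHr IHl2 IHr2] xt /=.
case: eqP => [<-|/eqP xy]; first by exists l, r.
case: ifP => xl.
  case: ifP => odd_d.
    have [a [b [-> E]]] := IHl xl.
    by exists a, (SNode b y r); rewrite /= -E -!catA /= -?catA.
  case: l xl odd_d IHl2 {IHl xt} => [//|ll z lr] xl odd_d /(_ _ _ _ erefl) [IHll IHlr].
  have xz : x != z.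
    by apply: contraFN odd_d => /eqP xz; rewrite /= xz eqxx mem_cat mem_head orbT.
  case: ifP => xll.
    have [a [b [-> E]]] := IHll xll.
    by exists a, (SNode b z (SNode lr y r)); rewrite /= -E -!catA /= -?catA.
  have xlr : x \in inorder lr by move: xl; rewrite /= mem_cat in_cons xll (negbTE xz).
  have [a [b [-> E]]] := IHlr xlr.
  by exists (SNode ll z a), (SNode b y r); rewrite /= -E -!catA /= -?catA.
have xr : x \in inorder r by move: xt; rewrite /= mem_cat in_cons xl (negbTE xy).
rewrite xr; case: ifP => odd_d.
  have [a [b [-> E]]] := IHr xr.
  by exists (SNode l y a), b; rewrite /= -E -!catA /= -?catA.
case: r xr odd_d IHr2 {IHr xt} => [//|rl z rr] xr odd_d /(_ _ _ _ erefl) [IHrl IHrr].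
have xz : x != z.
  by apply: contraFN odd_d => /eqP xz; rewrite /= xl xz eqxx.
case: ifP => xrr.
  have [a [b [-> E]]] := IHrr xrr.
  by exists (SNode (SNode l y rl) z a), b; rewrite /= -E -!catA /= -?catA.
have xrl : x \in inorder rl by move: xr; rewrite /= mem_cat in_cons xrr (negbTE xz) !orbF.
have [a [b [-> E]]] := IHrl xrl.
by exists (SNode l y a), (SNode b z rr); rewrite /= -E -!catA /= -?catA.
Qed.

Lemma splay_notin x t : x \notin inorder t -> splay x t = t.
Proof.
case: t => [//|l y r] /=; rewrite mem_cat in_cons !negb_or => /and3P [xl xy xr].
by rewrite (negbTE xl) (negbTE xy) (negbTE xr).
Qed.

Lemma inorder_splay x t : inorder (splay x t) = inorder t.
Proof.
have [/splay_to_root [a [b [-> <-]]] //|xt] := boolP (x \in inorder t).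
by rewrite splay_notin.
Qed.

Lemma sdepth_le x t : sdepth x t <= size (inorder t).
Proof.
elim: t => [//|l IHl y r IHr] /=; rewrite size_cat /=.
by case: (x == y) => //; case: (x \in inorder l); lia.
Qed.

Lemma leftmost_steps_le t : leftmost_steps t <= size (inorder t).
Proof.
elim: t => [//|l IHl y r IHr] /=; rewrite size_cat /=.
by case: l IHl => [//|ll z lr] /= IHl; lia.
Qed.

End SplayTree.

Section AuxTreeIndex.
Variable V : finType.
Implicit Types (s : state V) (x : V).

Lemma mem_all_verts s i x :
  i < size s -> x \in inorder (nth (SLeaf, None) s i).1 -> x \in all_verts s.
Proof.
elim: s i => [//|tp s IH] [|i] /=; rewrite /all_verts /= mem_cat.
  by move=> _ ->.
by move=> lt_i /(IH i lt_i) ->; rewrite orbT.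
Qed.

Lemma uniq_nth_inorder s i :
  uniq (all_verts s) -> uniq (inorder (nth (SLeaf, None) s i).1).
Proof.
elim: s i => [|tp s IH] [|i]; rewrite /all_verts //= cat_uniq => /and3P [U_tp _ U_s] //.
exact: IH.
Qed.

Lemma tidx_nth s i x : uniq (all_verts s) -> i < size s ->
  x \in inorder (nth (SLeaf, None) s i).1 -> tidx s x = i.
Proof.
elim: s i => [//|tp s IH] i; rewrite {1}/all_verts /= cat_uniq => /and3P [_ disj U_s].
rewrite /tidx /=; case: i => [_ -> //|i lt_i xi].
rewrite ifF; first by congr S; exact: IH.
by apply: contraNF disj => x_tp; apply/hasP; exists x => //; exact: mem_all_verts lt_i xi.
Qed.

Lemma rpar_nth s i x0 j : uniq (all_verts s) -> i < size s ->
  j < size (inorder (nth (SLeaf, None) s i).1) ->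
  rpar s (nth x0 (inorder (nth (SLeaf, None) s i).1) j) =
  if j is j'.+1 then Some (nth x0 (inorder (nth (SLeaf, None) s i).1) j')
  else (nth (SLeaf, None) s i).2.
Proof.
move=> U lt_i lt_j; rewrite /rpar (tidx_nth U lt_i (mem_nth x0 lt_j)).
rewrite index_uniq ?uniq_nth_inorder //; case: j lt_j => //= j lt_j.
by rewrite (set_nth_default x0) // ltnW.
Qed.

Lemma sorted_rpar s i : uniq (all_verts s) -> i < size s ->
  let: (t, p) := nth (SLeaf, None) s i in
  sorted [rel a b | rpar s b == Some a] (seq_of_opt p ++ inorder t).
Proof.
move=> U lt_i; have := fun x0 j => @rpar_nth s i x0 j U lt_i.
case: nth => t [q|] /= rpar_t.
  by apply/(pathP q) => k lt_k; rewrite /= rpar_t //; case: k lt_k.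
case: (inorder t) rpar_t => [//|x l] rpar_t.
by apply/(sortedP x) => k lt_k; rewrite /= (rpar_t x k.+1 lt_k).
Qed.

Lemma splay_extract s w t p rest l z r :
  extract s w = (t, p, rest) -> splay w t = SNode l z r ->
  z = w /\ inorder l ++ w :: inorder r = inorder t.
Proof.
rewrite /extract => -[Etp _].
have -> : t = (nth (SLeaf, None) s (tidx s w)).1 by rewrite Etp.
rewrite /tidx => Esplay.
have [has_w|no_w] := boolP (has (fun p : stree V * option V => w \in inorder p.1) s).
  have [a [b []]] := splay_to_root (nth_find (SLeaf, None) has_w).
  by rewrite Esplay => -[-> -> ->].
by move: Esplay; rewrite nth_default // leqNgt -has_find.
Qed.

End AuxTreeIndex.

Section RankedState.
Variables (V : finType) (h : V -> nat).

Definition ranked (tp : stree V * option V) : bool :=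
  sorted (relpre h ltn) (seq_of_opt tp.2 ++ inorder tp.1).

Lemma ranked_splay x t p : ranked (splay x t, p) = ranked (t, p).
Proof. by rewrite /ranked /= inorder_splay. Qed.

Lemma extract_ranked (s : state V) w t p rest :
  extract s w = (t, p, rest) -> all ranked s -> ranked (t, p) /\ all ranked rest.
Proof.
rewrite /extract => -[<- <-] As; split.
  have [lt_i|ge_i] := ltnP (tidx s w) (size s); first exact: (all_nthP _ As).
  by rewrite nth_default.
have Atake n : all ranked (take n s).
  by move: As; rewrite -{1}(cat_take_drop n s) all_cat => /andP [].
have Adrop n : all ranked (drop n s).
  by move: As; rewrite -{1}(cat_take_drop n s) all_cat => /andP [].
by rewrite all_cat Atake Adrop.
Qed.

Lemma ranked_split (t : stree V) p l w r (rest : state V) :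
  ranked (t, p) -> inorder l ++ w :: inorder r = inorder t -> all ranked rest ->
  all ranked (if r is SLeaf then rest else (r, Some w) :: rest).
Proof.
move=> + Et; rewrite /ranked /= -Et catA sorted_cat_cons => /andP [_ path_r] Arest.
by case: r Et path_r => //= ? ? ? _ ->.
Qed.

Lemma ranked_splice (t tv : stree V) p l w r :
  ranked (t, p) -> inorder l ++ w :: inorder r = inorder t -> ranked (tv, Some w) ->
  ranked (SNode l w tv, p).
Proof.
by move=> + Et; rewrite /ranked /= -Et !catA !sorted_cat_cons => /andP [->].
Qed.

Lemma ranked_path_parent (t : stree V) u w :
  ranked (t, Some u) -> w \in inorder t -> h u < h w.
Proof.
have lt_trans : transitive (relpre h ltn) by move=> y x z /=; apply: ltn_trans.
by move=> /(order_path_min lt_trans) /allP; apply.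
Qed.

Lemma size_ranked B (t : stree V) p : (forall x, h x <= B) -> ranked (t, p) ->
  size (inorder t) <= B.+1.
Proof.
move=> h_le /cat_sorted2 [_].
rewrite -sorted_map -(size_map h) -(size_iota 0 B.+1) => sorted_h.
apply: uniq_leq_size; first exact: sorted_uniq ltn_trans ltnn _ sorted_h.
by move=> _ /mapP [x _ ->]; rewrite mem_iota ltnS h_le.
Qed.

End RankedState.

Section AccessCost.
Variables (V : finType) (h : V -> nat) (B : nat).
Hypothesis h_le : forall x, h x <= B.

Lemma splay_cost_ranked x (t : stree V) p : ranked h (t, p) -> splay_cost x t <= B.+2.
Proof. by move=> /(size_ranked h_le); have := sdepth_le x t; rewrite /splay_cost; lia. Qed.

Lemma access_loop_step f v (tv : stree V) w s tw p rest :
  extract s w = (tw, p, rest) ->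
  access_loop f.+1 v tv (Some w) s =
  match splay w tw with
  | SLeaf => (tv, Some w, s, 0)
  | SNode l _ r =>
    let: (t, pp', s', c) :=
      access_loop f v (splay v (SNode l w tv)) p
        (if r is SLeaf then rest else (r, Some w) :: rest) in
    (t, pp', s', splay_cost w tw + splay_cost v (SNode l w tv) + 1 + c)
  end.
Proof.
move=> Ex; have -> : tw = (extract s w).1.1 by rewrite Ex.
have -> : p = (extract s w).1.2 by rewrite Ex.
by have -> : rest = (extract s w).2 by rewrite Ex.
Qed.

Lemma access_loop_ranked f v (tv : stree V) pp (s : state V) :
  all (ranked h) s -> ranked h (tv, pp) ->
  let: (t, pp', s', c) := access_loop f v tv pp s in
  [/\ c <= oapp (fun w => (h w).+1) 0 pp * (2 * B + 5),
      ranked h (t, pp') & all (ranked h) s'].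
Proof.
elim: f v tv pp s => [|f IH] v tv [w|] s As Rtv //.
case Ex: (extract s w) => [[tw p] rest].
have [Rw Arest] := extract_ranked Ex As.
rewrite (access_loop_step _ _ _ Ex).
case Esplay: splay => [//|l z r].
have [_ Ew] := splay_extract Ex Esplay.
have Rtn : ranked h (SNode l w tv, p) by apply: ranked_splice Rw Ew Rtv.
have := IH v _ _ _ (ranked_split Rw Ew Arest) (etrans (ranked_splay h v _ _) Rtn).
case: access_loop => [[[t pp'] s'] c] [c_le -> ->]; split=> //.
have c_le' : c <= h w * (2 * B + 5).
  apply: leq_trans c_le _; rewrite leq_mul2r; apply/orP; right.
  case: p {Ex Rtn} Rw => [q Rq|//] /=.
  by apply: ranked_path_parent Rq _; rewrite -Ew mem_cat mem_head orbT.
have := splay_cost_ranked w Rw; have := splay_cost_ranked v Rtn.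
rewrite /= mulSn; lia.
Qed.

Lemma access_ranked (s : state V) v : all (ranked h) s ->
  let: (s', c) := access s v in c <= 2 * B.+2 ^ 2 /\ all (ranked h) s'.
Proof.
move=> As; rewrite /access; case Ex: (extract s v) => [[t p] rest] /=.
have [Rt Arest] := extract_ranked Ex As.
case Esplay: splay => [//|l z r].
have [-> Ev] := splay_extract Ex Esplay.
have Rl : ranked h (SNode l v SLeaf, p) by apply: ranked_splice Rt Ev _.
have := access_loop_ranked #|V| v (ranked_split Rt Ev Arest) Rl.
case: access_loop => [[[t' pp'] s'] c] [c_le Rt' As']; split; last exact/andP.
have c_le' : c <= B.+1 * (2 * B + 5).
  apply: leq_trans c_le _; rewrite leq_mul2r.
  by case: (p) => [q|] /=; rewrite ?ltnS ?h_le orbT.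
have := splay_cost_ranked v Rt; lia.
Qed.

Lemma op_cost_ranked (s : state V) o : all (ranked h) s -> op_cost s o <= 5 * B.+2 ^ 2.
Proof.
move=> As; rewrite /op_cost; case: o => [v|v|v w|v] /=.
- by have := access_ranked v As; case: access => s1 c1 [c_le _] /=; lia.
- have := access_ranked v As; case: access => s1 c1 [c_le As1] /=.
  case: s1 As1 => [|[t p] rest] /=; first lia.
  case/andP=> Rt _; case: leftmost => [r|] /=; last lia.
  have := leftmost_steps_le t; have := size_ranked h_le Rt.
  have := splay_cost_ranked r Rt; lia.
- have := access_ranked v As; case: access => s1 c1 [c1_le As1] /=.
  have := access_ranked w As1; case: access => s2 c2 [c2_le _] /=.
  by case: s2 => [|[tw p] rest] /=; [|case: (extract rest v).1.1 => [|? ? ?] /=]; lia.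
- have := access_ranked v As; case: access => s1 c1 [c_le _] /=.
  by case: s1 => [|[[|? ? ?] p] rest] /=; lia.
Qed.

End AccessCost.

Section ForestRank.
Variables (V : finType) (s : state V).
Hypothesis rpar_acyclic : forall x, exists n, iter n (obind (rpar s)) (Some x) = None.

Lemma exists_iter_rpar_None x : exists n, iter n (obind (rpar s)) (Some x) == None.
Proof. by have [n En] := rpar_acyclic x; exists n; rewrite En. Qed.

Definition rank x : nat := ex_minn (exists_iter_rpar_None x).

Lemma rank_rpar x y : rpar s x = Some y -> rank x = (rank y).+1.
Proof.
rewrite /rank => Exy; case: ex_minnP => m Pm min_m; case: ex_minnP => k Pk min_k.
case: m Pm min_m => [//|m] Pm min_m.
have := min_m k.+1; rewrite iterSr /= Exy => /(_ Pk).
by move: Pm; rewrite iterSr /= Exy => /min_k; lia.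
Qed.

Lemma rank_root x : rpar s x = None -> rank x = 1.
Proof.
rewrite /rank => Ex; case: ex_minnP => [[//|m] _ min_m].
by have := min_m 1; rewrite /= Ex => /(_ isT); lia.
Qed.

Lemma rank_gt0 x : 0 < rank x.
Proof. by rewrite /rank; case: ex_minnP => [[]]. Qed.

Lemma rank_ancestors x :
  exists p, size p = (rank x).-1 /\ path [rel a b | rpar s a == Some b] x p.
Proof.
suff: forall k x, rank x = k.+1 ->
    exists p, size p = k /\ path [rel a b | rpar s a == Some b] x p.
  by apply; rewrite prednK ?rank_gt0.
elim=> [|k IH] {}x rank_x; first by exists [::].
case Ex: (rpar s x) => [y|]; last by move: rank_x; rewrite rank_root.
have [|p [size_p path_p]] := IH y; first by move: rank_x; rewrite (rank_rpar Ex) => -[].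
by exists (y :: p); rewrite /= Ex eqxx size_p.
Qed.

Lemma rank_le_diam D x : diam_le s D -> rank x <= D.+1.
Proof.
move=> diam; have [p [size_p path_p]] := rank_ancestors x.
have path_adj : path (adj s) x p by apply: sub_path path_p => a b /= ab; rewrite /adj ab.
have uniq_xp : uniq (x :: p).
  apply: (@sorted_uniq _ (relpre rank gtn)).
  - by move=> y a b /= lt_ya lt_by; exact: ltn_trans lt_by lt_ya.
  - by move=> a; exact: ltnn.
  by apply: sub_path path_p => a b /eqP /rank_rpar /= ->.
by have := diam x p uniq_xp path_adj; rewrite size_p; have := rank_gt0 x; lia.
Qed.

Lemma ranked_rank : uniq (all_verts s) -> all (ranked rank) s.
Proof.
move=> U; apply/(all_nthP (SLeaf, None)) => i lt_i.
have := sorted_rpar U lt_i; rewrite /ranked; case: nth => t p /=.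
by apply: sub_sorted => a b /eqP /rank_rpar /= ->.
Qed.

End ForestRank.

Theorem theoremB1 :
  exists c : nat, forall (V : finType) (D : nat) (s : state V) (o : op V),
    lct_valid s -> diam_le s D -> op_pre s o ->
    op_cost s o <= c * D.+1 ^ 2.
Proof.
exists 45 => V D s o [uniq_s _ acyclic] diam _.
have rank_le x := rank_le_diam acyclic x diam.
apply: leq_trans (op_cost_ranked rank_le o (ranked_rank acyclic uniq_s)) _.
nia.
Qed.
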